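(* Let $\mathscr{X}$ be a commutative association scheme with splitting field $\mathbb{F}$, and let $\mathbb{K}_1$ and $\mathbb{K}_2$ be subfields of $\mathbb{F}$. If $\mathscr{X}$ satisfies Property $\mathsf{M}_{\mathbb{K}_1}$ and Property $\mathsf{M}_{\mathbb{K}_2}$, then $\mathscr{X}$ satisfies Property $\mathsf{M}_{\mathbb{K}_1\cap\mathbb{K}_2}$.
   Context: A (commutative) association scheme is a pair $(X,\mathcal{R})$ with $X$ a nonempty finite set and $\mathcal{R}=\{R_0,\ldots,R_d\}$ a partition of $X\times X$ such that $R_0$ is the identity relation, each transpose $R_i^\top$ is some $R_{i'}$, and there are numbers $p_{ij}^k=p_{ji}^k$ such that for every $(a,b)\in R_k$ the number of $c$ with $(a,c)\in R_i$, $(c,b)\in R_j$ is $p_{ij}^k$. Its adjacency matrices $A_0,\ldots,A_d$ are the $0/1$ matrices of the $R_i$; their complex span has a unique basis of primitive idempotents $E_0,\ldots,E_d$ ($E_iE_j=\delta_{ij}E_i$, $\sum_jE_j=I$). The splitting field is $\mathbb{Q}$ with all eigenvalues of $A_1,\ldots,A_d$ adjoined. For a field $\mathbb{K}\subseteq\mathbb{C}$, $\mathcal{E}_\mathbb{K}=\{\sum_{j=0}^d c_jE_j: c_j\in\{0,1\},\ \text{all entries in }\mathbb{K}\}$, and $\mathbb{K}[\mathcal{E}_\mathbb{K}]$ is its $\mathbb{K}$-span. The scheme has Property $\mathsf{M}_\mathbb{K}$ if $\mathbb{K}[\mathcal{E}_\mathbb{K}]$ is closed under Schur (entrywise) multiplication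 (equivalently, the complex span of $\mathcal{E}_\mathbb{K}$ is the Bose-Mesner algebra of a fusion scheme of $\mathscr{X}$). *)

From mathcomp Require Import all_boot all_order all_algebra all_field.
Set Implicit Arguments. Unset Strict Implicit. Unset Printing Implicit Defensive.
Import GRing.Theory Num.Theory.
Local Open Scope ring_scope.

(* The scheme lives on the point set X = 'I_n; a partition of X x X into
   d+1 classes R_0..R_d is encoded by R : X -> X -> 'I_d.+1
   (R x y = i  iff  (x,y) \in R_i). *)

Definition adjmx n d (R : 'I_n -> 'I_n -> 'I_d.+1) (i : 'I_d.+1) : 'M[algC]_n :=
  \matrix_(x, y) ((R x y == i)%:R).

Definition comm_assoc_scheme n d (R : 'I_n -> 'I_n -> 'I_d.+1) : Prop :=
  [/\ (0 < n)%N,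
      (forall x y, R x y = ord0 <-> x = y),
      (forall i, exists x y, R x y = i),
      (forall i, exists i', forall x y, R y x = i' <-> R x y = i) &
      (* intersection numbers p_ij^k = p_ji^k *)
      (forall i j k, exists p : nat, forall a b, R a b = k ->
          #|[set c | (R a c == i) && (R c b == j)]| = p /\
          #|[set c | (R a c == j) && (R c b == i)]| = p)].

Definition in_BM n d (R : 'I_n -> 'I_n -> 'I_d.+1) (M : 'M[algC]_n) : Prop :=
  exists c : 'I_d.+1 -> algC, M = \sum_i c i *: adjmx R i.

Definition prim_idems n d (R : 'I_n -> 'I_n -> 'I_d.+1)
    (E : 'I_d.+1 -> 'M[algC]_n) : Prop :=
  [/\ (forall j, in_BM R (E j)),
      (forall j, E j != 0),
      (forall i j, E i *m E j = if i == j then E i else 0) &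
      \sum_j E j = 1%:M].

Definition is_subfield (K : algC -> Prop) : Prop :=
  [/\ K 0 /\ K 1,
      (forall x y, K x -> K y -> K (x + y)),
      (forall x, K x -> K (- x)),
      (forall x y, K x -> K y -> K (x * y)) &
      (forall x, K x -> K x^-1)].

(* Splitting field: the smallest subfield of algC containing all eigenvalues
   of A_1..A_d (it contains Q, and A_0 = I has eigenvalue 1 only). *)
Definition splitting_field n d (R : 'I_n -> 'I_n -> 'I_d.+1) (x : algC) : Prop :=
  forall K, is_subfield K ->
    (forall (i : 'I_d.+1) a, i != ord0 -> eigenvalue (adjmx R i) a -> K a) -> K x.

Definition idem_sum n d (E : 'I_d.+1 -> 'M[algC]_n) (S : {set 'I_d.+1}) : 'M[algC]_n :=
  \sum_(j in S) E j.

Definition in_EK n d (K : algC -> Prop) (E : 'I_d.+1 -> 'M[algC]_n)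
    (S : {set 'I_d.+1}) : Prop :=
  forall u v, K (idem_sum E S u v).

Definition in_KEK n d (K : algC -> Prop) (E : 'I_d.+1 -> 'M[algC]_n)
    (M : 'M[algC]_n) : Prop :=
  exists a : {set 'I_d.+1} -> algC,
    (forall S, K (a S) /\ (a S = 0 \/ in_EK K E S)) /\
    M = \sum_(S : {set 'I_d.+1}) a S *: idem_sum E S.

Definition schur n (M N : 'M[algC]_n) : 'M[algC]_n :=
  \matrix_(u, v) (M u v * N u v).

Definition PropertyM n d (R : 'I_n -> 'I_n -> 'I_d.+1) (K : algC -> Prop) : Prop :=
  forall E, prim_idems R E ->
    forall M N, in_KEK K E M -> in_KEK K E N -> in_KEK K E (schur M N).

From mathcomp Require Import all_boot all_order all_algebra all_field.
Set Implicit Arguments. Unset Strict Implicit. Unset Printing Implicit Defensive.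
Import GRing.Theory Num.Theory.
Local Open Scope ring_scope.

(* Write the Schur product of M and N as Z = \sum_j z_j E_j.  As Z lies in
   K1[E_K1] and in K2[E_K2], its eigenvalues z_j lie in K1 and, by uniqueness
   of the coordinates on the E_j, in K2; its entries lie in K1 and in K2 as
   well.  For a level set S = {i | z_i = z_k}, Lagrange interpolation writes
   E_S as a polynomial in Z with coefficients in K = K1 \cap K2, so E_S has
   entries in K, and Z = \sum_S z_S E_S lies in K[E_K]. *)

Section Subfield.

Variable K : algC -> Prop.
Hypothesis K_subfield : is_subfield K.

Lemma subfield0 : K 0. Proof. by case: K_subfield => [[]]. Qed.

Lemma subfieldB x y : K x -> K y -> K (x - y).
Proof. by case: K_subfield => _ KD KN _ _ Kx Ky; apply/KD/KN. Qed.

Lemma subfieldM x y : K x -> K y -> K (x * y).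
Proof. by case: K_subfield => _ _ _ KM _; apply: KM. Qed.

Lemma subfieldV x : K x -> K x^-1.
Proof. by case: K_subfield => _ _ _ _ KV; apply: KV. Qed.

Lemma subfield_sum (I : Type) (r : seq I) (P : pred I) (F : I -> algC) :
  (forall i, P i -> K (F i)) -> K (\sum_(i <- r | P i) F i).
Proof. by case: K_subfield => [[K0 _] KD _ _ _]; apply: big_ind. Qed.

Lemma subfield_natr m : K m%:R.
Proof.
case: K_subfield => [[K0 K1] KD _ _ _].
by elim: m => [|m IHm]; rewrite ?mulrS; auto.
Qed.

Definition mx_over n (A : 'M[algC]_n) := forall u v, K (A u v).

Lemma mx_over_sum n (I : Type) (r : seq I) (P : pred I) (F : I -> 'M_n) :
  (forall i, P i -> mx_over (F i)) -> mx_over (\sum_(i <- r | P i) F i).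
Proof. by move=> KF u v; rewrite summxE; apply: subfield_sum => i /KF. Qed.

Lemma mx_over_scale n a (A : 'M_n) : K a -> mx_over A -> mx_over (a *: A).
Proof. by move=> Ka KA u v; rewrite mxE; apply: subfieldM. Qed.

Lemma mx_over_scalar n a : K a -> mx_over (a%:M : 'M_n).
Proof.
by move=> Ka u v; rewrite mxE -mulr_natr; apply: subfieldM => //; apply: subfield_natr.
Qed.

Lemma mx_over_sub n (A B : 'M_n) : mx_over A -> mx_over B -> mx_over (A - B).
Proof. by move=> KA KB u v; rewrite !mxE; apply: subfieldB. Qed.

Lemma mx_over_mul n (A B : 'M_n) : mx_over A -> mx_over B -> mx_over (A * B).
Proof.
move=> KA KB u v; rewrite -mulmxE mxE.
by apply: subfield_sum => w _; apply: subfieldM.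
Qed.

Lemma mx_over_prod n (I : Type) (r : seq I) (P : pred I) (F : I -> 'M_n) :
  (forall i, P i -> mx_over (F i)) -> mx_over (\prod_(i <- r | P i) F i).
Proof.
move=> KF; apply: big_ind => //; last exact: mx_over_mul.
exact: (mx_over_scalar (subfield_natr 1)).
Qed.

End Subfield.

Lemma subfield_inter (K1 K2 : algC -> Prop) :
  is_subfield K1 -> is_subfield K2 -> is_subfield (fun x => K1 x /\ K2 x).
Proof.
case=> [[K10 K11] K1D K1N K1M K1V] [[K20 K21] K2D K2N K2M K2V].
by split=> [|x y [? ?] [? ?]|x [? ?]|x y [? ?] [? ?]|x [? ?]]; auto.
Qed.

Definition level (I : finType) (T : eqType) (z : I -> T) (k : I) : {set I} :=
  [set i | z i == z k].

Definition level_coef (I : finType) (R : pzRingType) (z : I -> R) (S : {set I}) :=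
  if [pick k | S == level z k] is Some k then z k else 0.

Lemma sum_level_coef (I : finType) (R : pzRingType) (z : I -> R) j :
  \sum_(S : {set I}) level_coef z S * (j \in S)%:R = z j.
Proof.
rewrite (bigD1 (level z j)) //= inE eqxx mulr1 big1 ?addr0.
  rewrite /level_coef; case: pickP => [k /eqP eq_jk | /(_ j)]; last by rewrite eqxx.
  have : j \in level z k by rewrite -eq_jk inE.
  by rewrite inE => /eqP.
move=> S neq_Sj; have [jS|] := boolP (j \in S); last by rewrite mulr0.
rewrite /level_coef; case: pickP => [k /eqP eq_Sk | _]; last by rewrite mul0r.
move: jS neq_Sj; rewrite eq_Sk inE => /eqP eq_zjk.
by rewrite /level eq_zjk eqxx.
Qed.

Section IdempotentCombinations.

Variables n d : nat.
Variable E : 'I_d.+1 -> 'M[algC]_n.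
Hypothesis E_orth : forall i j, E i *m E j = if i == j then E i else 0.
Hypothesis E_sum1 : \sum_j E j = 1%:M.

Definition idem_comb (c : 'I_d.+1 -> algC) : 'M[algC]_n := \sum_j c j *: E j.

Lemma eq_idem_comb c c' : c =1 c' -> idem_comb c = idem_comb c'.
Proof. by move=> eq_c; apply: eq_bigr => j _; rewrite eq_c. Qed.

Lemma idem_comb_const a : idem_comb (fun=> a) = a%:M.
Proof. by rewrite -scalemx1 -E_sum1 scaler_sumr. Qed.

Lemma scale_idem_comb a c : a *: idem_comb c = idem_comb (fun j => a * c j).
Proof. by rewrite scaler_sumr; apply: eq_bigr => j _; rewrite scalerA. Qed.

Lemma idem_combB c c' : idem_comb c - idem_comb c' = idem_comb (fun j => c j - c' j).
Proof. by rewrite -sumrB; apply: eq_bigr => j _; rewrite scalerBl. Qed.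

Lemma idem_comb_mulmx_idem c k : idem_comb c *m E k = c k *: E k.
Proof.
rewrite mulmx_suml (bigD1 k) //= -scalemxAl E_orth eqxx big1 ?addr0 //.
by move=> j /negbTE neq_jk; rewrite -scalemxAl E_orth neq_jk scaler0.
Qed.

Lemma idem_combM c c' : idem_comb c * idem_comb c' = idem_comb (fun j => c j * c' j).
Proof.
rewrite -mulmxE {2}/idem_comb mulmx_sumr; apply: eq_bigr => j _.
by rewrite -scalemxAr idem_comb_mulmx_idem scalerA mulrC.
Qed.

Lemma idem_comb_prod (I : Type) (r : seq I) (P : pred I) (f : I -> 'I_d.+1 -> algC) :
  \prod_(i <- r | P i) idem_comb (f i) =
  idem_comb (fun j => \prod_(i <- r | P i) f i j).
Proof.
elim: r => [|i r IHr].
  by rewrite big_nil (eq_idem_comb (c' := fun=> 1)) ?idem_comb_const // => j;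
     rewrite big_nil.
rewrite big_cons IHr; case: ifP => Pi; last first.
  by apply: eq_idem_comb => j; rewrite big_cons Pi.
by rewrite idem_combM; apply: eq_idem_comb => j; rewrite big_cons Pi.
Qed.

Lemma idem_comb_inj c c' k : E k != 0 -> idem_comb c = idem_comb c' -> c k = c' k.
Proof.
move=> nz_Ek eq_cc'; apply/eqP; rewrite -subr_eq0.
have := congr1 (mulmx^~ (E k)) eq_cc'; rewrite !idem_comb_mulmx_idem => /eqP.
by rewrite -subr_eq0 -scalerBl scaler_eq0 (negbTE nz_Ek) orbF.
Qed.

Lemma idem_sumE S : idem_sum E S = idem_comb (fun j => (j \in S)%:R).
Proof.
rewrite /idem_sum big_mkcond; apply: eq_bigr => j _.
by case: (j \in S); rewrite ?scale1r ?scale0r.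
Qed.

Lemma sum_scale_idem_sum (a : {set 'I_d.+1} -> algC) :
  \sum_(S : {set 'I_d.+1}) a S *: idem_sum E S =
  idem_comb (fun j => \sum_(S : {set 'I_d.+1}) a S * (j \in S)%:R).
Proof.
under eq_bigr do rewrite idem_sumE scale_idem_comb.
by rewrite exchange_big; apply: eq_bigr => j _; rewrite scaler_suml.
Qed.

Lemma in_KEK_weaken (K K' : algC -> Prop) M :
  (forall x, K x -> K' x) -> in_KEK K E M -> in_KEK K' E M.
Proof.
move=> subKK' [a [Ka ->]]; exists a; split=> // S.
by have [? [?|?]] := Ka S; split; auto; right=> u v; auto.
Qed.

Lemma in_KEK_coefs (K : algC -> Prop) M :
  is_subfield K -> in_KEK K E M ->
  exists2 c, (forall j, K (c j)) & M = idem_comb c.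
Proof.
move=> K_sf [a [Ka ->]]; rewrite sum_scale_idem_sum; eexists=> // j.
apply: subfield_sum => // S _; have [KaS _] := Ka S.
by apply: subfieldM => //; apply: subfield_natr.
Qed.

Lemma in_KEK_mx_over (K : algC -> Prop) M :
  is_subfield K -> in_KEK K E M -> mx_over K M.
Proof.
move=> K_sf [a [Ka ->]]; apply: mx_over_sum => // S _.
have [KaS [->|EK_S]] := Ka S; last exact: mx_over_scale.
by rewrite scale0r => u v; rewrite mxE; apply: subfield0.
Qed.

(* Lagrange interpolation: each factor is 1 on the level set of k, and for
   i outside it the factor indexed by i vanishes. *)
Lemma idem_sum_level c k :
  idem_sum E (level c k) =
  \prod_(j | c j != c k) ((c k - c j)^-1 *: (idem_comb c - (c j)%:M)).
Proof.
under [RHS]eq_bigr do rewrite -idem_comb_const idem_combB scale_idem_comb.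
rewrite idem_comb_prod idem_sumE; apply: eq_idem_comb => i; rewrite inE.
have [eq_ik|neq_ik] := eqVneq (c i) (c k).
  by rewrite big1 // => j neq_jk; rewrite eq_ik mulVf // subr_eq0 eq_sym.
by rewrite (bigD1 i) //= subrr mulr0 mul0r.
Qed.

Lemma in_EK_level (K : algC -> Prop) c k :
  is_subfield K -> (forall j, K (c j)) -> mx_over K (idem_comb c) ->
  in_EK K E (level c k).
Proof.
move=> K_sf Kc Kcomb; rewrite /in_EK idem_sum_level.
apply: mx_over_prod => // j _; apply: mx_over_scale => //.
  by apply: subfieldV => //; apply: subfieldB.
by apply: mx_over_sub => //; apply: mx_over_scalar.
Qed.

Lemma idem_comb_in_KEK (K : algC -> Prop) c :
  is_subfield K -> (forall j, K (c j)) -> mx_over K (idem_comb c) ->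
  in_KEK K E (idem_comb c).
Proof.
move=> K_sf Kc Kcomb; exists (level_coef c); split=> [S|]; last first.
  by rewrite sum_scale_idem_sum; apply: eq_idem_comb => j; rewrite sum_level_coef.
rewrite /level_coef; case: pickP => [k /eqP -> | _].
  by split; [|right; apply: in_EK_level].
by split; [apply: subfield0 | left].
Qed.

End IdempotentCombinations.

Theorem proposition3p10 (n d : nat) (R : 'I_n -> 'I_n -> 'I_d.+1)
    (K1 K2 : algC -> Prop) :
  comm_assoc_scheme R ->
  is_subfield K1 -> (forall x, K1 x -> splitting_field R x) ->
  is_subfield K2 -> (forall x, K2 x -> splitting_field R x) ->
  PropertyM R K1 -> PropertyM R K2 ->
  PropertyM R (fun x => K1 x /\ K2 x).
Proof.
move=> _ K1_sf _ K2_sf _ PM1 PM2 E E_prim M N KM KN.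
have [_ E_nz E_orth E_sum1] := E_prim.
have K_K1 x : K1 x /\ K2 x -> K1 x by case.
have K_K2 x : K1 x /\ K2 x -> K2 x by case.
have KZ1 := PM1 E E_prim M N (in_KEK_weaken K_K1 KM) (in_KEK_weaken K_K1 KN).
have KZ2 := PM2 E E_prim M N (in_KEK_weaken K_K2 KM) (in_KEK_weaken K_K2 KN).
have [z K1z Ez] := in_KEK_coefs K1_sf KZ1.
have [z' K2z' Ez'] := in_KEK_coefs K2_sf KZ2.
have K2z j : K2 (z j).
  by rewrite (idem_comb_inj E_orth (E_nz j) (etrans (esym Ez) Ez')).
rewrite Ez; apply: (idem_comb_in_KEK E_orth E_sum1 (subfield_inter K1_sf K2_sf)).
  by move=> j; split; [apply: K1z | apply: K2z].
rewrite -Ez => u v.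
by split; [apply: (in_KEK_mx_over K1_sf KZ1) | apply: (in_KEK_mx_over K2_sf KZ2)].
Qed.
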